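(* Let $\bar\alpha\in[0,1]$ and $n\ge1$, and let $\boldsymbol{\alpha}^*=(\alpha^*_1,\dots,\alpha^*_n)$ be a maximizer of $$\max_{\boldsymbol{\alpha}\in[0,1]^n} C(\boldsymbol{\alpha})\quad\text{subject to}\quad G(\boldsymbol{\alpha})=0,$$ with its entries ordered so that $\alpha^*_1\ge\alpha^*_2\ge\dots\ge\alpha^*_n$. Let $m=\max\{i:\alpha^*_i=1\}$, with $m=0$ if no entry equals $1$. Then $$m=\left\lfloor \frac{\bar\alpha\, n\,(k_1-k_2)}{k_1-\bar\alpha k_2}\right\rfloor .$$
   Context: Model of a road with $n\ge1$ parallel lanes of common length $d>0$. Vehicles have length $L>0$. A vehicle keeps a headway (space gap) $\bar h$ to the vehicle in front of it if both it and the vehicle in front are autonomous, and headway $h$ otherwise, where $0\le \bar h<h$. Vehicle types within a lane are i.i.d. Bernoulli: each vehicle in lane $i$ is autonomous with probability $\alpha_i\in[0,1]$ (the lane's autonomy level). Set $k_1=(L+h)/d$ and $k_2=(h-\bar h)/d$, so $k_1>k_2>0$ and $k_1-k_2=(L+\bar h)/d>0$. The capacity of a lane with autonomy level $\alpha\in[0,1]$ is $$c(\alpha)=\frac{1}{k_1-k_2\alpha^2}=\frac{d}{L+h-(h-\bar h)\alpha^2}.$$ Let $\bar\alpha\in[0,1]$ be the overall fraction of autonomous vehicles on the road. For $\boldsymbol{\alpha}=(\alpha_1,\dots,\alpha_n)\in[0,1]^n$ define $C(\boldsymbol{\alpha})=\sum_{i=1}^n c(\alpha_i)$ (total capacity)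 and $G(\boldsymbol{\alpha})=\sum_{i=1}^n(\alpha_i-\bar\alpha)c(\alpha_i)$; the constraint $G(\boldsymbol{\alpha})=0$ expresses that the overall autonomy level equals $\bar\alpha$. *)

From Stdlib Require Import Reals Lra Lia.
From Stdlib Require Export Zfloor.
Open Scope R_scope.

Fixpoint rsum (n : nat) (f : nat -> R) : R :=
  match n with
  | O => 0
  | S k => rsum k f + f k
  end.

Definition k1 (d L h hbar : R) : R := (L + h) / d.
Definition k2 (d L h hbar : R) : R := (h - hbar) / d.

Definition cap (d L h hbar a : R) : R :=
  1 / (k1 d L h hbar - k2 d L h hbar * a ^ 2).

(* Lanes are indexed 0..n-1 (lane i+1 of the paper is index i). *)
Definition totC (d L h hbar : R) (n : nat) (alpha : nat -> R) : R :=
  rsum n (fun i => cap d L h hbar (alpha i)).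

Definition totG (d L h hbar abar : R) (n : nat) (alpha : nat -> R) : R :=
  rsum n (fun i => (alpha i - abar) * cap d L h hbar (alpha i)).

Definition feasible (d L h hbar abar : R) (n : nat) (alpha : nat -> R) : Prop :=
  (forall i, (i < n)%nat -> 0 <= alpha i <= 1) /\ totG d L h hbar abar n alpha = 0.

Definition is_maximizer (d L h hbar abar : R) (n : nat) (alpha : nat -> R) : Prop :=
  feasible d L h hbar abar n alpha /\
  forall beta, feasible d L h hbar abar n beta ->
    totC d L h hbar n beta <= totC d L h hbar n alpha.

Definition sorted_desc (n : nat) (alpha : nat -> R) : Prop :=
  forall i j, (i <= j)%nat -> (j < n)%nat -> alpha j <= alpha i.

(* m = max { i in 1..n : alpha*_i = 1 } (1-indexed), or 0 if there is none.
   With 0-based indices: alpha (m-1) = 1 when m >= 1, and every index j with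
   alpha j = 1 satisfies j < m. *)
Definition is_last_one (n : nat) (alpha : nat -> R) (m : nat) : Prop :=
  (m <= n)%nat /\
  (forall j, (j < n)%nat -> alpha j = 1 -> (j < m)%nat) /\
  (m = 0%nat \/ alpha (m - 1)%nat = 1).

From Stdlib Require Import Reals Lra Lia.
Open Scope R_scope.

(* A lane with autonomy x contributes [lane_cap x] to C and [lane_excess x] to G.
   The excess is strictly increasing on [0,1], and the capacity, read as a
   function of the excess, is strictly convex.  Hence two lanes of interior
   autonomy can always be pushed apart (one of them to 0 or 1) keeping G and
   increasing C: a maximizer has at most one interior lane.  Sorted, it is
   m ones, one lane in [0,1), and zeros, and comparing G with the profiles
   (m ones, zeros) and (m+1 ones, zeros), whose G is an affine function of the
   number of ones vanishing at θ = ab n (k1 - k2) / (k1 - ab k2), gives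
   m <= θ < m + 1. *)

Lemma rsum_ext n F G : (forall k, (k < n)%nat -> F k = G k) -> rsum n F = rsum n G.
Proof.
  induction n as [|n IH]; intros H; simpl; [reflexivity |].
  rewrite IH, (H n) by (try intros; try apply H; lia); reflexivity.
Qed.

Lemma rsum_le n F G : (forall k, (k < n)%nat -> F k <= G k) -> rsum n F <= rsum n G.
Proof.
  induction n as [|n IH]; intros H; simpl; [lra |].
  pose proof (IH ltac:(intros; apply H; lia)); pose proof (H n ltac:(lia)); lra.
Qed.

Lemma rsum_lt n F G i : (forall k, (k < n)%nat -> F k <= G k) -> (i < n)%nat -> F i < G i ->
  rsum n F < rsum n G.
Proof.
  induction n as [|n IH]; intros H Hi Hlt; simpl; [lia |].
  destruct (Nat.eq_dec i n) as [-> | Hne].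
  - pose proof (rsum_le n F G ltac:(intros; apply H; lia)); lra.
  - pose proof (IH ltac:(intros; apply H; lia) ltac:(lia) Hlt); pose proof (H n ltac:(lia)); lra.
Qed.

Definition update (F : nat -> R) (i : nat) (v : R) (k : nat) : R :=
  if Nat.eqb k i then v else F k.

Lemma update_neq F i v k : k <> i -> update F i v k = F k.
Proof. intros; unfold update; rewrite (proj2 (Nat.eqb_neq k i)); auto. Qed.

Lemma rsum_update n Phi F i v : (i < n)%nat ->
  rsum n (fun k => Phi (update F i v k)) = rsum n (fun k => Phi (F k)) + (Phi v - Phi (F i)).
Proof.
  induction n as [|n IH]; intros Hi; simpl; [lia |].
  destruct (Nat.eq_dec i n) as [-> | Hne].
  - rewrite (rsum_ext n _ (fun k => Phi (F k))) by (intros; rewrite update_neq by lia; reflexivity).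
    unfold update; rewrite Nat.eqb_refl; ring.
  - rewrite IH, update_neq by lia; ring.
Qed.

Lemma rsum_step n t A B :
  rsum n (fun j => if Nat.ltb j t then A else B) = INR (Nat.min n t) * A + INR (n - t) * B.
Proof.
  induction n as [|n IH]; cbn [rsum].
  - replace (0 - t)%nat with 0%nat by lia; simpl; ring.
  - rewrite IH; destruct (Nat.ltb_spec n t).
    + replace (Nat.min (S n) t) with (S (Nat.min n t)) by lia.
      replace (S n - t)%nat with 0%nat by lia; replace (n - t)%nat with 0%nat by lia.
      rewrite S_INR; simpl; ring.
    + replace (Nat.min (S n) t) with (Nat.min n t) by lia.
      replace (S n - t)%nat with (S (n - t)) by lia; rewrite S_INR; ring.
Qed.

Definition lane_cap (K1 K2 x : R) : R := 1 / (K1 - K2 * x ^ 2).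
Definition lane_excess (K1 K2 ab x : R) : R := (x - ab) * lane_cap K1 K2 x.

Section Lane.
Variables K1 K2 ab : R.
Hypothesis HK2 : 0 < K2.
Hypothesis HK12 : K2 < K1.
Hypothesis Hab : 0 <= ab <= 1.

Local Notation c := (lane_cap K1 K2).
Local Notation f := (lane_excess K1 K2 ab).

Lemma lane_denom_pos x : 0 <= x <= 1 -> 0 < K1 - K2 * x ^ 2.
Proof. intros; assert (x ^ 2 <= 1) by nra; nra. Qed.

Lemma lane_excess_lt a b : 0 <= a -> a < b -> b <= 1 -> f a < f b.
Proof.
  intros Ha Hlt Hb.
  pose proof (lane_denom_pos a ltac:(lra)); pose proof (lane_denom_pos b ltac:(lra)).
  assert (E : f b - f a = (b - a) * (K1 + K2 * a * b - K2 * ab * (a + b))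
                          / ((K1 - K2 * a ^ 2) * (K1 - K2 * b ^ 2))).
  { unfold lane_excess, lane_cap; field; lra. }
  assert (0 < K1 + K2 * a * b - K2 * ab * (a + b)).
  { (* it equals (K1 - K2) + K2 (1 - a) (1 - b) + K2 (a + b) (1 - ab) *)
    assert (0 <= K2 * ((1 - a) * (1 - b))) by (repeat apply Rmult_le_pos; lra).
    assert (0 <= K2 * (a + b) * (1 - ab)) by (repeat apply Rmult_le_pos; lra).
    nra. }
  assert (0 < (b - a) * (K1 + K2 * a * b - K2 * ab * (a + b))
              / ((K1 - K2 * a ^ 2) * (K1 - K2 * b ^ 2))).
  { apply Rdiv_lt_0_compat; apply Rmult_lt_0_compat; lra. }
  lra.
Qed.

Lemma lane_excess_le a b : 0 <= a -> a <= b -> b <= 1 -> f a <= f b.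
Proof.
  intros Ha [Hlt | ->] Hb; [left; apply lane_excess_lt |]; lra.
Qed.

Lemma lane_excess_lt_inv a b : 0 <= a <= 1 -> 0 <= b <= 1 -> f a < f b -> a < b.
Proof.
  intros Ha Hb Hf; apply Rnot_le_lt; intro Hba.
  pose proof (lane_excess_le b a ltac:(lra) Hba ltac:(lra)); lra.
Qed.

Lemma lane_cap_convex_in_excess p a q : 0 <= p -> p < a -> a < q -> q <= 1 ->
  (c a - c p) * (f q - f p) < (c q - c p) * (f a - f p).
Proof.
  intros Hp Hpa Haq Hq.
  pose proof (lane_denom_pos p ltac:(lra)) as Dp.
  pose proof (lane_denom_pos a ltac:(lra)) as Da.
  pose proof (lane_denom_pos q ltac:(lra)) as Dq.
  assert (E : (c q - c p) * (f a - f p) - (c a - c p) * (f q - f p)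
    = K2 * ((a - p) * (q - p) * (q - a))
      / ((K1 - K2 * p ^ 2) * (K1 - K2 * a ^ 2) * (K1 - K2 * q ^ 2))).
  { unfold lane_excess, lane_cap; field; lra. }
  assert (0 < K2 * ((a - p) * (q - p) * (q - a))
      / ((K1 - K2 * p ^ 2) * (K1 - K2 * a ^ 2) * (K1 - K2 * q ^ 2))).
  { apply Rdiv_lt_0_compat; repeat apply Rmult_lt_0_compat; lra. }
  lra.
Qed.

Lemma lane_excess_onto y : f 0 <= y <= f 1 -> exists a, 0 <= a <= 1 /\ f a = y.
Proof.
  intros Hy.
  set (P a := (a - ab) - y * (K1 - K2 * a ^ 2)).
  assert (HP : forall a, 0 <= a <= 1 -> P a = (K1 - K2 * a ^ 2) * (f a - y)).
  { intros a Ha; pose proof (lane_denom_pos a Ha).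
    unfold P, lane_excess, lane_cap; field; lra. }
  assert (HP01 : P 0 * P 1 <= 0).
  { rewrite (HP 0), (HP 1) by lra.
    pose proof (lane_denom_pos 0 ltac:(lra)); pose proof (lane_denom_pos 1 ltac:(lra)).
    assert (0 <= (K1 - K2 * 0 ^ 2) * (K1 - K2 * 1 ^ 2) * ((y - f 0) * (f 1 - y)))
      by (repeat apply Rmult_le_pos; lra).
    lra. }
  destruct (IVT_cor P 0 1 ltac:(unfold P; reg) ltac:(lra) HP01) as [z [Hz Pz]].
  exists z; split; [exact Hz |].
  rewrite HP in Pz by exact Hz.
  pose proof (lane_denom_pos z Hz).
  apply Rmult_integral in Pz as [|]; lra.
Qed.

Lemma lane_cap_spread p a b q : 0 <= p -> p < a -> p < b -> a < q -> b < q -> q <= 1 ->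
  f p + f q = f a + f b -> c a + c b < c p + c q.
Proof.
  intros Hp Hpa Hpb Haq Hbq Hq E.
  pose proof (lane_cap_convex_in_excess p a q Hp Hpa Haq Hq).
  pose proof (lane_cap_convex_in_excess p b q Hp Hpb Hbq Hq).
  assert (0 < f q - f p) by (apply Rlt_0_minus, lane_excess_lt; lra).
  (* add the two chord inequalities, using f q - f p = (f a - f p) + (f b - f p) *)
  assert (Hsum : (c a + c b - 2 * c p) * (f q - f p) < (c q - c p) * (f q - f p)).
  { replace ((c q - c p) * (f q - f p))
      with ((c q - c p) * (f a - f p) + (c q - c p) * (f b - f p))
      by (replace (f q - f p) with ((f a - f p) + (f b - f p)) by lra; ring).
    lra. }
  apply Rmult_lt_reg_r in Hsum; lra.
Qed.

Lemma lane_cap_spread_to_boundary a b : 0 < a < 1 -> 0 < b < 1 ->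
  exists p q, 0 <= p <= 1 /\ 0 <= q <= 1 /\
    f p + f q = f a + f b /\ c a + c b < c p + c q.
Proof.
  intros Ha Hb.
  assert (f 0 < f a < f 1) by (split; apply lane_excess_lt; lra).
  assert (f 0 < f b < f 1) by (split; apply lane_excess_lt; lra).
  destruct (Rle_lt_dec (f a + f b - f 0) (f 1)).
  - destruct (lane_excess_onto (f a + f b - f 0)) as [q [Hq Eq]]; [lra |].
    assert (a < q /\ b < q) as [] by (split; apply lane_excess_lt_inv; lra).
    exists 0, q; repeat split; try lra.
    apply lane_cap_spread; lra.
  - destruct (lane_excess_onto (f a + f b - f 1)) as [p [Hp Ep]]; [lra |].
    assert (p < a /\ p < b) as [] by (split; apply lane_excess_lt_inv; lra).
    exists p, 1; repeat split; try lra.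
    apply lane_cap_spread; lra.
Qed.

Lemma excess_of_extremes t N :
  t * f 1 + (N - t) * f 0
  = (t - ab * N * (K1 - K2) / (K1 - ab * K2)) * ((K1 - ab * K2) / (K1 * (K1 - K2))).
Proof. assert (0 < K1 - ab * K2) by nra; unfold lane_excess, lane_cap; field; lra. Qed.

Lemma rsum_excess_extremes n t : (t <= n)%nat ->
  rsum n (fun j => if Nat.ltb j t then f 1 else f 0)
  = (INR t - ab * INR n * (K1 - K2) / (K1 - ab * K2)) * ((K1 - ab * K2) / (K1 * (K1 - K2))).
Proof.
  intros Ht; rewrite rsum_step, <- excess_of_extremes, minus_INR by exact Ht.
  replace (Nat.min n t) with t by lia; reflexivity.
Qed.

Lemma threshold_bounds n m alpha : (m <= n)%nat ->
  (forall j, (j < n)%nat -> 0 <= alpha j <= 1) ->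
  (forall j, (j < m)%nat -> alpha j = 1) ->
  ((m < n)%nat -> alpha m < 1) ->
  (forall j, (m < j)%nat -> (j < n)%nat -> alpha j = 0) ->
  rsum n (fun j => f (alpha j)) = 0 ->
  INR m <= ab * INR n * (K1 - K2) / (K1 - ab * K2) < INR m + 1.
Proof.
  intros Hmn Hr Hone Hm Hzero HG.
  assert (Hscale : 0 < (K1 - ab * K2) / (K1 * (K1 - K2))).
  { apply Rdiv_lt_0_compat; [nra | apply Rmult_lt_0_compat; lra]. }
  assert (Hlo : rsum n (fun j => if Nat.ltb j m then f 1 else f 0)
                <= rsum n (fun j => f (alpha j))).
  { apply rsum_le; intros j Hj.
    destruct (Nat.ltb_spec j m); [rewrite Hone by lia; lra |].
    apply lane_excess_le; apply Hr in Hj; lra. }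
  rewrite HG, rsum_excess_extremes in Hlo by exact Hmn.
  destruct (Nat.eq_dec m n) as [-> | Hne].
  - assert (Hhi : rsum n (fun j => f (alpha j))
                  <= rsum n (fun j => if Nat.ltb j n then f 1 else f 0)).
    { apply rsum_le; intros j Hj.
      destruct (Nat.ltb_spec j n); [| lia].
      apply lane_excess_le; apply Hr in Hj; lra. }
    rewrite HG, rsum_excess_extremes in Hhi by lia.
    split; nra.
  - assert (Hhi : rsum n (fun j => f (alpha j))
                  < rsum n (fun j => if Nat.ltb j (S m) then f 1 else f 0)).
    { apply (rsum_lt _ _ _ m); [intros j Hj | lia |].
      - destruct (Nat.ltb_spec j (S m)).
        + destruct (Nat.eq_dec j m) as [-> |]; [| rewrite Hone by lia; lra].
          apply lane_excess_le; apply Hr in Hj; lra.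
        + rewrite Hzero by lia; lra.
      - destruct (Nat.ltb_spec m (S m)); [| lia].
        pose proof (Hr m ltac:(lia)); pose proof (Hm ltac:(lia)).
        apply lane_excess_lt; lra. }
    rewrite HG, rsum_excess_extremes, S_INR in Hhi by lia.
    split; nra.
Qed.

Lemma optimum_at_most_one_interior n alpha :
  (forall i, (i < n)%nat -> 0 <= alpha i <= 1) ->
  (forall beta, (forall i, (i < n)%nat -> 0 <= beta i <= 1) ->
     rsum n (fun i => f (beta i)) = rsum n (fun i => f (alpha i)) ->
     rsum n (fun i => c (beta i)) <= rsum n (fun i => c (alpha i))) ->
  forall i j, (i < n)%nat -> (j < n)%nat -> i <> j ->
  0 < alpha i < 1 -> 0 < alpha j < 1 -> False.
Proof.
  intros Halpha Hopt i j Hi Hj Hij Hai Haj.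
  destruct (lane_cap_spread_to_boundary _ _ Hai Haj) as [p [q [Hp [Hq [Ef Ec]]]]].
  set (beta := update (update alpha j q) i p).
  assert (Hsum : forall Phi : R -> R, rsum n (fun k => Phi (beta k))
      = rsum n (fun k => Phi (alpha k)) + (Phi p + Phi q - Phi (alpha i) - Phi (alpha j))).
  { intros Phi; unfold beta; rewrite !rsum_update, update_neq by (auto || lia); ring. }
  assert (Hr : forall k, (k < n)%nat -> 0 <= beta k <= 1).
  { intros k Hk; unfold beta, update.
    destruct (Nat.eqb k i); [lra |]; destruct (Nat.eqb k j); [lra | auto]. }
  pose proof (Hopt beta Hr ltac:(rewrite Hsum; lra)) as Hc.
  rewrite Hsum in Hc; lra.
Qed.

End Lane.

Lemma last_one_prefix n alpha m :
  (forall j, (j < n)%nat -> alpha j <= 1) -> sorted_desc n alpha -> is_last_one n alpha m ->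
  forall j, (j < m)%nat -> alpha j = 1.
Proof.
  intros Hr Hsort [Hmn [_ [Hm0 | Hlast]]] j Hj; [lia |].
  pose proof (Hsort j (m - 1)%nat ltac:(lia) ltac:(lia)); pose proof (Hr j ltac:(lia)); lra.
Qed.

Lemma last_one_suffix n alpha m :
  (forall j, (j < n)%nat -> alpha j <= 1) -> is_last_one n alpha m ->
  forall j, (m <= j)%nat -> (j < n)%nat -> alpha j < 1.
Proof.
  intros Hr [_ [Hbefore _]] j Hmj Hj.
  destruct (Hr j Hj) as [| Hone]; [assumption |].
  apply Hbefore in Hone; [lia | exact Hj].
Qed.

Lemma sorted_zero_after_interior n alpha m : sorted_desc n alpha ->
  (forall i j, (i < n)%nat -> (j < n)%nat -> i <> j ->
     0 < alpha i < 1 -> 0 < alpha j < 1 -> False) ->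
  (forall j, (j < n)%nat -> 0 <= alpha j) ->
  alpha m < 1 -> forall j, (m < j)%nat -> (j < n)%nat -> alpha j = 0.
Proof.
  intros Hsort Hint Hr Hm j Hmj Hj.
  destruct (Hr j Hj) as [Hpos | Hzero]; [exfalso | auto].
  pose proof (Hsort m j ltac:(lia) Hj).
  apply (Hint m j); lia || lra.
Qed.

Theorem theorem2 (d L h hbar abar : R) (n : nat) (alpha : nat -> R) (m : nat)
  (Hd : 0 < d) (HL : 0 < L) (Hhbar : 0 <= hbar) (Hh : hbar < h)
  (Habar : 0 <= abar <= 1) (Hn : (1 <= n)%nat)
  (Hmax : is_maximizer d L h hbar abar n alpha)
  (Hsort : sorted_desc n alpha)
  (Hm : is_last_one n alpha m) :
  Z.of_nat m =
  Zfloor (abar * INR n * (k1 d L h hbar - k2 d L h hbar)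
          / (k1 d L h hbar - abar * k2 d L h hbar)).
Proof.
  assert (HK2 : 0 < k2 d L h hbar) by (unfold k2; apply Rdiv_lt_0_compat; lra).
  assert (HK12 : k2 d L h hbar < k1 d L h hbar).
  { unfold k1, k2; apply Rmult_lt_compat_r; [apply Rinv_0_lt_compat |]; lra. }
  destruct Hmax as [[Hr HG] Hopt].
  pose proof (optimum_at_most_one_interior _ _ abar HK2 HK12 Habar n alpha Hr
    (fun beta Hb Hf => Hopt beta (conj Hb (eq_trans Hf HG)))) as Hint.
  assert (Hle1 : forall j, (j < n)%nat -> alpha j <= 1) by (intros j Hj; apply Hr, Hj).
  assert (Hone := last_one_prefix n alpha m Hle1 Hsort Hm).
  assert (Hbelow := last_one_suffix n alpha m Hle1 Hm).
  assert (Hmn : (m <= n)%nat) by apply Hm.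
  symmetry; apply Zfloor_eq; rewrite <- INR_IZR_INZ.
  apply (threshold_bounds _ _ abar HK2 HK12 Habar n m alpha Hmn Hr Hone); [| | exact HG].
  - intros; apply Hbelow; lia.
  - intros j Hmj Hj.
    apply (sorted_zero_after_interior n alpha m Hsort Hint); try assumption.
    + intros k Hk; apply Hr, Hk.
    + apply Hbelow; lia.
Qed.
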